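(* Consider 3-stick folded ribbon unknots $K_{w,F}$ (the knot diagram $K$ is a triangle). The minimum ribbonlength of such a folded ribbon unknot is less than or equal to (1) $3\sqrt{3}$ when the folds at the three vertices are all of the same type, and (2) $\sqrt{3}$ when the fold at one vertex is of a different type from the other two.
   Context: A polygonal knot diagram $K$ is a piecewise linear immersion $S^1\to\mathbb{R}^2$ with vertices $v_1,\dots,v_n$ and edges $e_i=[v_i,v_{i+1}]$ (indices mod $n$), oriented by the labeling. The fold angle $\theta_i\in[0,\pi]$ at $v_i$ is the angle between $e_{i-1}$ and $e_i$. The folded ribbon $K_w$ of width $w$ is built by placing at each $v_i$ with $\theta_i<\pi$ a fold line of length $w/\cos(\theta_i/2)$ centered at $v_i$ perpendicular to the bisector of $\theta_i$, and joining ends of consecutive fold lines by boundary segments parallel to and at distance $w/2$ from $K$. Folding information $F$ records at each vertex whether the ribbon of $e_i$ lies over (overfold) or under (underfold) the ribbon of $e_{i-1}$; two folds are of the same type if both are overfolds or both are underfolds. $K_{w,F}$ is allowed if the ribbon is immersed away from the fold lines and admits a choice of crossing information (a continuous, antisymmetric, transitive $\pm1$-valued function on pairs of distinct points of the ribbon with the same image) agreeing with $F$ and with the crossing information of $K$. The ribbonlength of an allowed $K_{w,F}$ is $\operatorname{length}(K)/w$. *)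

From Stdlib Require Import Reals Lra.
Open Scope R_scope.

Definition pt : Type := (R * R)%type.
Definition padd (p q : pt) : pt := (fst p + fst q, snd p + snd q).
Definition psub (p q : pt) : pt := (fst p - fst q, snd p - snd q).
Definition pscale (c : R) (p : pt) : pt := (c * fst p, c * snd p).
Definition dot (p q : pt) : R := fst p * fst q + snd p * snd q.
Definition cross (p q : pt) : R := fst p * snd q - snd p * fst q.
Definition pnorm (p : pt) : R := sqrt (dot p p).
Definition rot90 (p : pt) : pt := (- snd p, fst p).

Definition vert (V : nat -> pt) (i : nat) : pt := V (i mod 3).
Definition edge (V : nat -> pt) (i : nat) : pt := psub (vert V (S i)) (vert V i).

Definition nondegenerate (V : nat -> pt) : Prop := cross (edge V 0) (edge V 1) <> 0.

Definition length_K (V : nat -> pt) : R :=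
  pnorm (edge V 0) + pnorm (edge V 1) + pnorm (edge V 2).

Definition to_prev (V : nat -> pt) (i : nat) : pt := psub (vert V (i + 2)) (vert V i).
Definition to_next (V : nat -> pt) (i : nat) : pt := psub (vert V (i + 1)) (vert V i).

Definition fold_angle (V : nat -> pt) (i : nat) : R :=
  acos (dot (to_prev V i) (to_next V i) / (pnorm (to_prev V i) * pnorm (to_next V i))).

Definition bisector (V : nat -> pt) (i : nat) : pt :=
  padd (pscale (/ pnorm (to_prev V i)) (to_prev V i))
       (pscale (/ pnorm (to_next V i)) (to_next V i)).

Definition fold_dir (V : nat -> pt) (i : nat) : pt :=
  pscale (/ pnorm (bisector V i)) (rot90 (bisector V i)).

(** The fold line at v_i is the segment centered at v_i, perpendicular to the
    bisector of theta_i, of length w / cos(theta_i/2):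
      { fold_pt V i d | -w/2 <= d <= w/2 }.
    The parameter d is the signed distance (positive = left side) from the
    point fold_pt V i d to the oriented line through e_i; the point with
    parameter d on the fold line at v_{i+1} is at signed distance -d from the
    line through e_i (the ribbon flips at a fold). *)
Definition fold_pt (V : nat -> pt) (i : nat) (d : R) : pt :=
  padd (vert V i) (pscale (d / cos (fold_angle V i / 2)) (fold_dir V i)).

(** * The folded ribbon K_w
    Abstract ribbon points are triples (i, s, d) with i < 3, 0 <= s <= 1,
    |d| <= w/2.  The piece of the ribbon belonging to edge e_i is the region
    between the fold lines at v_i and v_{i+1}, swept by the segments
    (parallel to e_i, at signed distance d from it) joining the fold-line
    points with equal distance to e_i; d = +-w/2 gives the boundary segments. *)
Definition rpt : Type := (nat * R * R)%type.
Definition rp_i (p : rpt) : nat := fst (fst p).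
Definition rp_s (p : rpt) : R := snd (fst p).
Definition rp_d (p : rpt) : R := snd p.

Definition in_ribbon (w : R) (p : rpt) : Prop :=
  (rp_i p < 3)%nat /\ 0 <= rp_s p <= 1 /\ - (w / 2) <= rp_d p <= w / 2.

Definition ribbon_map (V : nat -> pt) (i : nat) (s d : R) : pt :=
  padd (pscale (1 - s) (fold_pt V i d)) (pscale s (fold_pt V (S i) (- d))).

Definition image (V : nat -> pt) (p : rpt) : pt := ribbon_map V (rp_i p) (rp_s p) (rp_d p).

Definition glue1 (p q : rpt) : Prop :=
  rp_s p = 1 /\ rp_s q = 0 /\ rp_i q = (S (rp_i p)) mod 3 /\ rp_d q = - rp_d p.

Definition same_pt (p q : rpt) : Prop := p = q \/ glue1 p q \/ glue1 q p.

Definition near (delta : R) (p q : rpt) : Prop :=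
  exists p' q', same_pt p p' /\ same_pt q q' /\ rp_i p' = rp_i q' /\
    Rabs (rp_s p' - rp_s q') + Rabs (rp_d p' - rp_d q') < delta.

Definition immersed_away_from_folds (V : nat -> pt) (w : R) : Prop :=
  forall i s d, (i < 3)%nat -> 0 < s < 1 -> - (w / 2) <= d <= w / 2 ->
  exists delta, 0 < delta /\
    forall s1 d1 s2 d2,
      0 < s1 < 1 -> - (w / 2) <= d1 <= w / 2 ->
      0 < s2 < 1 -> - (w / 2) <= d2 <= w / 2 ->
      Rabs (s1 - s) + Rabs (d1 - d) < delta ->
      Rabs (s2 - s) + Rabs (d2 - d) < delta ->
      ribbon_map V i s1 d1 = ribbon_map V i s2 d2 -> s1 = s2 /\ d1 = d2.

Definition double_pt (V : nat -> pt) (w : R) (p q : rpt) : Prop :=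
  in_ribbon w p /\ in_ribbon w q /\ ~ same_pt p q /\ image V p = image V q.

(** Crossing information: a continuous, antisymmetric, transitive +-1-valued
    function on pairs of distinct ribbon points with the same image
    (sigma p q = 1 means p lies over q). *)
Definition crossing_info (V : nat -> pt) (w : R) (sigma : rpt -> rpt -> R) : Prop :=
  (forall p q, double_pt V w p q -> sigma p q = 1 \/ sigma p q = -1) /\
  (forall p q p' q', double_pt V w p q -> same_pt p p' -> same_pt q q' ->
     in_ribbon w p' -> in_ribbon w q' -> sigma p' q' = sigma p q) /\
  (forall p q, double_pt V w p q -> sigma q p = - sigma p q) /\
  (forall p q r, double_pt V w p q -> double_pt V w q r -> double_pt V w p r ->
     sigma p q = 1 -> sigma q r = 1 -> sigma p r = 1) /\
  (* continuity (= local constancy, as sigma is +-1 valued) *)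
  (forall p q, double_pt V w p q -> exists delta, 0 < delta /\
     forall p' q', near delta p p' -> near delta q q' -> double_pt V w p' q' ->
       sigma p' q' = sigma p q).

(** Folding information F : nat -> bool; F i = true means the fold at v_i is an
    overfold (ribbon of e_i over ribbon of e_{i-1}), false an underfold. *)
Definition agrees_with_folds (V : nat -> pt) (w : R) (F : nat -> bool)
    (sigma : rpt -> rpt -> R) : Prop :=
  exists delta, 0 < delta /\
    forall i p q, (i < 3)%nat ->
      rp_i p = i -> rp_s p < delta ->
      rp_i q = (i + 2) mod 3 -> 1 - delta < rp_s q ->
      double_pt V w p q ->
      sigma p q = (if F i then 1 else -1).

(** K_{w,F} is allowed.  (The triangle K has no crossings, so agreement with
    the crossing information of K is vacuous.) *)
Definition allowed (V : nat -> pt) (w : R) (F : nat -> bool) : Prop :=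
  immersed_away_from_folds V w /\
  exists sigma, crossing_info V w sigma /\ agrees_with_folds V w F sigma.

Definition ribbonlength (V : nat -> pt) (w : R) : R := length_K V / w.

Definition all_same_type (F : nat -> bool) : Prop := F 0%nat = F 1%nat /\ F 1%nat = F 2%nat.

(* inf { ribbonlength of allowed 3-stick K_{w,F} with folding information F } <= c *)
Definition min_ribbonlength_le (F : nat -> bool) (c : R) : Prop :=
  forall eps, 0 < eps -> exists (V : nat -> pt) (w : R),
    nondegenerate V /\ 0 < w /\ allowed V w F /\ ribbonlength V w <= c + eps.

(* Take the equilateral triangle of side 2.  Each piece of its ribbon is swept by
   segments at signed distance [d] from its edge, and each fold line is parallel to the
   opposite side at distance equal to the height [sqrt 3].  Hence for [w < 2 sqrt 3] the
   ribbon is immersed and its double points lie in the interiors of two distinct pieces;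
   stacking each pair of pieces as dictated by the fold between them is crossing
   information.  It is transitive unless the three folds have the same type and there is
   a triple point; as the distances to the three sides sum to [sqrt 3], triple points need
   [w >= 2 sqrt 3 / 3].  The ribbonlength [6 / w] thus approaches [sqrt 3], resp.
   [3 sqrt 3]. *)

From Stdlib Require Import Reals Lra Lia.
Open Scope R_scope.

Lemma sqrt3_sq : sqrt 3 * sqrt 3 = 3.
Proof. apply sqrt_sqrt; lra. Qed.

Lemma sqrt3_pos : 0 < sqrt 3.
Proof. apply sqrt_lt_R0; lra. Qed.

Lemma ribbon_map_s0 V i d : ribbon_map V i 0 d = fold_pt V i d.
Proof.
  unfold ribbon_map; destruct (fold_pt V i d), (fold_pt V (S i) (- d)).
  unfold padd, pscale; simpl; f_equal; ring.
Qed.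

Lemma ribbon_map_s1 V i d : ribbon_map V i 1 d = fold_pt V (S i) (- d).
Proof.
  unfold ribbon_map; destruct (fold_pt V i d), (fold_pt V (S i) (- d)).
  unfold padd, pscale; simpl; f_equal; ring.
Qed.

Lemma same_pt_sym p q : same_pt p q -> same_pt q p.
Proof. unfold same_pt; intros [->|[G|G]]; auto. Qed.

Lemma double_pt_sym V w p q : double_pt V w p q -> double_pt V w q p.
Proof.
  intros [Hp [Hq [N E]]]; refine (conj Hq (conj Hp (conj _ (eq_sym E)))).
  intros S; apply N, same_pt_sym, S.
Qed.

Lemma same_pt_interior p p' : 0 < rp_s p < 1 -> same_pt p p' -> p' = p.
Proof. intros H [->|[[G _]|[_ [G _]]]]; [reflexivity|lra|lra]. Qed.

Lemma vert_mod V i : vert V (i mod 3) = vert V i.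
Proof. unfold vert; now rewrite Nat.Div0.mod_mod. Qed.

Lemma vert_mod_add V i k : vert V (i mod 3 + k) = vert V (i + k).
Proof. unfold vert; now rewrite Nat.Div0.add_mod_idemp_l. Qed.

Lemma fold_pt_mod V i d : fold_pt V (i mod 3) d = fold_pt V i d.
Proof.
  unfold fold_pt, fold_angle, fold_dir, bisector, to_prev, to_next.
  now rewrite !vert_mod_add, vert_mod.
Qed.

(* At a vertex with two sides of length [L] meeting at angle [pi/3] the fold angle is
   [pi/3], so [cos (theta/2) = sqrt 3 / 2] and the bisector has length [sqrt 3]. *)
Lemma fold_pt_equilateral V i d L :
  0 < L ->
  dot (to_prev V i) (to_prev V i) = L * L ->
  dot (to_next V i) (to_next V i) = L * L ->
  dot (to_prev V i) (to_next V i) = L * L / 2 ->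
  fold_pt V i d =
  padd (vert V i) (pscale (2 * d / (3 * L)) (rot90 (padd (to_prev V i) (to_next V i)))).
Proof.
  intros HL Hpp Hnn Hpn.
  pose proof sqrt3_sq; pose proof sqrt3_pos.
  assert (HsL : sqrt (L * L) = L) by (apply sqrt_square; lra).
  unfold fold_pt, fold_angle, fold_dir, bisector, pnorm.
  rewrite Hpp, Hnn, Hpn, HsL.
  replace (L * L / 2 / (L * L)) with (cos (PI / 3)) by (rewrite cos_PI3; field; lra).
  rewrite acos_cos by (pose proof PI_RGT_0; split; lra).
  replace (PI / 3 / 2) with (PI / 6) by field.
  rewrite cos_PI6.
  destruct (to_prev V i) as [a1 a2], (to_next V i) as [b1 b2].
  unfold dot in *; simpl in *.
  assert (Hbis : (/ L * a1 + / L * b1) * (/ L * a1 + / L * b1) +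
                 (/ L * a2 + / L * b2) * (/ L * a2 + / L * b2) = 3).
  { replace 3 with ((a1 * a1 + a2 * a2 + (b1 * b1 + b2 * b2) + 2 * (a1 * b1 + a2 * b2))
                    / (L * L)) by (rewrite Hpp, Hnn, Hpn; field; lra).
    field; lra. }
  rewrite Hbis.
  unfold padd, pscale, rot90; simpl; f_equal.
  - replace (d / (sqrt 3 / 2) * (/ sqrt 3 * - (/ L * a2 + / L * b2)))
      with (2 * d / (sqrt 3 * sqrt 3 * L) * - (a2 + b2)) by (field; lra).
    now rewrite sqrt3_sq.
  - replace (d / (sqrt 3 / 2) * (/ sqrt 3 * (/ L * a1 + / L * b1)))
      with (2 * d / (sqrt 3 * sqrt 3 * L) * (a1 + b1)) by (field; lra).
    now rewrite sqrt3_sq.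
Qed.

Lemma length_K_nonneg V : 0 <= length_K V.
Proof.
  unfold length_K, pnorm.
  pose proof (sqrt_pos (dot (edge V 0) (edge V 0))).
  pose proof (sqrt_pos (dot (edge V 1) (edge V 1))).
  pose proof (sqrt_pos (dot (edge V 2) (edge V 2))).
  lra.
Qed.

Lemma min_ribbonlength_le_of_allowed V F W :
  nondegenerate V -> 0 < W -> (forall w, 0 < w < W -> allowed V w F) ->
  min_ribbonlength_le F (length_K V / W).
Proof.
  intros HV HW Hall eps Heps.
  set (L := length_K V).
  assert (HL : 0 <= L) by apply length_K_nonneg.
  (* [w := W / k] gives ribbonlength [L / W + eps * L / (L + 1)]; the [+ 1] avoids
     dividing by [L], about which nothing is assumed. *)
  set (k := 1 + eps * W / (L + 1)).
  assert (Hk : 1 < k).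
  { assert (0 < eps * W / (L + 1)) by (apply Rdiv_lt_0_compat; nra); unfold k; lra. }
  exists V, (W / k).
  assert (Hw : 0 < W / k < W).
  { split; [apply Rdiv_lt_0_compat; lra|].
    apply (Rmult_lt_reg_r k); [lra|]; unfold Rdiv; rewrite Rmult_assoc, Rinv_l; nra. }
  split; [exact HV|split; [lra|split; [exact (Hall _ Hw)|]]].
  unfold ribbonlength; fold L.
  replace (L / (W / k)) with (L / W + eps - eps / (L + 1)) by (unfold k; field; split; nra).
  assert (0 < eps / (L + 1)) by (apply Rdiv_lt_0_compat; lra).
  lra.
Qed.

Definition eqtri (n : nat) : pt :=
  match n with 0%nat => (0, 0) | 1%nat => (2, 0) | _ => (1, sqrt 3) end.

Lemma length_eqtri : length_K eqtri = 6.
Proof.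
  pose proof sqrt3_sq.
  assert (H2 : sqrt 4 = 2) by (replace 4 with (2 * 2) by ring; apply sqrt_square; lra).
  unfold length_K, edge, pnorm, vert, psub, dot; simpl.
  replace ((2 - 0) * (2 - 0) + (0 - 0) * (0 - 0)) with 4 by ring.
  replace ((1 - 2) * (1 - 2) + (sqrt 3 - 0) * (sqrt 3 - 0)) with 4 by nra.
  replace ((0 - 1) * (0 - 1) + (0 - sqrt 3) * (0 - sqrt 3)) with 4 by nra.
  rewrite H2; ring.
Qed.

Lemma nondegenerate_eqtri : nondegenerate eqtri.
Proof.
  pose proof sqrt3_pos.
  unfold nondegenerate, cross, edge, vert, psub; simpl; nra.
Qed.

Ltac eqtri_fold_pt :=
  pose proof sqrt3_sq; pose proof sqrt3_pos;
  rewrite (fold_pt_equilateral _ _ _ 2);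
  unfold to_prev, to_next, vert, padd, pscale, rot90, psub, dot; simpl;
  try lra; f_equal; nra.

Lemma fold_pt_eqtri0 d : fold_pt eqtri 0 d = (- (d * sqrt 3 / 3), d).
Proof. eqtri_fold_pt. Qed.

Lemma fold_pt_eqtri1 d : fold_pt eqtri 1 d = (2 - d * sqrt 3 / 3, - d).
Proof. eqtri_fold_pt. Qed.

Lemma fold_pt_eqtri2 d : fold_pt eqtri 2 d = (1 + 2 * d * sqrt 3 / 3, sqrt 3).
Proof. eqtri_fold_pt. Qed.

(* Signed distance to the line through [e_k], positive towards the interior, and
   the coordinate along [e_k]. *)
Definition edge_dist (k : nat) (X : pt) : R :=
  match k with
  | 0%nat => snd X
  | 1%nat => - (sqrt 3 / 2) * (fst X - 2) - snd X / 2
  | _ => (sqrt 3 / 2) * (fst X - 1) - (snd X - sqrt 3) / 2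
  end.

Definition edge_coord (k : nat) (X : pt) : R :=
  match k with
  | 0%nat => fst X
  | 1%nat => (- (fst X - 2) + sqrt 3 * snd X) / 2
  | _ => (- (fst X - 1) - sqrt 3 * (snd X - sqrt 3)) / 2
  end.

Ltac eqtri_coords :=
  pose proof sqrt3_sq;
  try change (fold_pt eqtri 3) with (fold_pt eqtri 0);
  rewrite ?fold_pt_eqtri0, ?fold_pt_eqtri1, ?fold_pt_eqtri2;
  unfold padd, pscale; simpl; field_simplify;
  rewrite ?(pow2_sqrt 3) by lra; field.

Lemma edge_dist_ribbon_map k s d :
  (k < 3)%nat -> edge_dist k (ribbon_map eqtri k s d) = d.
Proof.
  intros Hk; destruct k as [|[|[|k]]]; try lia; unfold ribbon_map; eqtri_coords.
Qed.

Lemma edge_coord_ribbon_map k s d : (k < 3)%nat ->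
  edge_coord k (ribbon_map eqtri k s d) = - (d * sqrt 3 / 3) + s * (2 + 2 * d * sqrt 3 / 3).
Proof.
  intros Hk; destruct k as [|[|[|k]]]; try lia; unfold ribbon_map; eqtri_coords.
Qed.

Lemma edge_dist_sum X : edge_dist 0 X + edge_dist 1 X + edge_dist 2 X = sqrt 3.
Proof. destruct X; simpl; field. Qed.

(* In an equilateral triangle the fold line at [v_k] is parallel to the opposite side. *)
Lemma edge_dist_fold_pt k d :
  (k < 3)%nat -> edge_dist (S k mod 3) (fold_pt eqtri k d) = sqrt 3.
Proof.
  intros Hk; destruct k as [|[|[|k]]]; try lia; eqtri_coords.
Qed.

Lemma ribbon_map_eqtri_inj k s1 d1 s2 d2 :
  (k < 3)%nat -> - sqrt 3 < d1 ->
  ribbon_map eqtri k s1 d1 = ribbon_map eqtri k s2 d2 -> s1 = s2 /\ d1 = d2.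
Proof.
  intros Hk Hd1 E.
  assert (Hd : d1 = d2).
  { rewrite <- (edge_dist_ribbon_map k s1 d1), <- (edge_dist_ribbon_map k s2 d2), E
      by exact Hk; reflexivity. }
  subst d2; split; [|reflexivity].
  pose proof (edge_coord_ribbon_map k s1 d1 Hk) as C1.
  pose proof (edge_coord_ribbon_map k s2 d1 Hk) as C2.
  rewrite E, C2 in C1.
  pose proof sqrt3_sq; pose proof sqrt3_pos.
  assert (0 < 2 + 2 * d1 * sqrt 3 / 3) by nra.
  apply (Rmult_eq_reg_r (2 + 2 * d1 * sqrt 3 / 3)); lra.
Qed.

Lemma mod3_neighbours i j : (i < 3)%nat -> (j < 3)%nat ->
  j = i \/ S j mod 3 = i \/ j = S i mod 3.
Proof. intros; destruct i as [|[|[|i]]], j as [|[|[|j]]]; simpl; lia. Qed.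

Lemma succ_mod3_inj i j : (i < 3)%nat -> (j < 3)%nat -> S j mod 3 = S i mod 3 -> j = i.
Proof. intros; destruct i as [|[|[|i]]], j as [|[|[|j]]]; simpl in *; lia. Qed.

Lemma fold_pt_on_piece i j t d e :
  (j < 3)%nat -> Rabs e < sqrt 3 ->
  ribbon_map eqtri j t e = fold_pt eqtri i d ->
  (j = i mod 3 /\ t = 0 /\ e = d) \/ (S j mod 3 = i mod 3 /\ t = 1 /\ e = - d).
Proof.
  intros Hj He E.
  apply Rabs_def2 in He.
  rewrite <- fold_pt_mod in E.
  assert (Hi : (i mod 3 < 3)%nat) by (apply Nat.mod_upper_bound; lia).
  destruct (mod3_neighbours (i mod 3) j Hi Hj) as [Hji|[Hji|Hji]].
  - rewrite <- Hji, <- ribbon_map_s0 in E.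
    destruct (ribbon_map_eqtri_inj j t e 0 d Hj ltac:(lra) E); left; auto.
  - rewrite <- Hji, fold_pt_mod, <- (Ropp_involutive d), <- ribbon_map_s1 in E.
    destruct (ribbon_map_eqtri_inj j t e 1 (- d) Hj ltac:(lra) E); right; auto.
  - exfalso; apply (f_equal (edge_dist j)) in E.
    rewrite edge_dist_ribbon_map, Hji, edge_dist_fold_pt in E by assumption; lra.
Qed.

Section EqtriRibbon.

Variable w : R.
Hypothesis w_bounds : 0 < w < 2 * sqrt 3.

Let ribbon_width_lt p : in_ribbon w p -> Rabs (rp_d p) < sqrt 3.
Proof. intros [_ [_ Hd]]; apply Rabs_def1; lra. Qed.

Lemma same_piece_same_pt p q :
  in_ribbon w p -> in_ribbon w q -> rp_i p = rp_i q -> image eqtri p = image eqtri q ->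
  same_pt p q.
Proof.
  intros Hp Hq Hi E.
  destruct p as [[i s] d], q as [[j t] e]; unfold rp_i, image in *; simpl in *; subst j.
  pose proof (ribbon_width_lt _ Hp) as Hd; apply Rabs_def2 in Hd; unfold rp_d in Hd; simpl in Hd.
  destruct (ribbon_map_eqtri_inj i s d t e (proj1 Hp) ltac:(lra) E); subst.
  now left.
Qed.

Lemma double_pt_interior_l p q : double_pt eqtri w p q -> 0 < rp_s p < 1.
Proof.
  intros [Hp [Hq [N E]]].
  pose proof (ribbon_width_lt _ Hq) as He.
  destruct p as [[i s] d], q as [[j t] e].
  unfold in_ribbon, image, rp_i, rp_s, rp_d in *; simpl in *.
  destruct Hp as [Hi [Hs _]], Hq as [Hj _].
  destruct (Req_dec s 0) as [->|Hs0]; [|destruct (Req_dec s 1) as [->|Hs1]; [|lra]];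
    exfalso; apply N.
  - rewrite ribbon_map_s0 in E.
    destruct (fold_pt_on_piece i j t d e Hj He (eq_sym E))
      as [[Hji [-> ->]]|[Hji [-> ->]]]; rewrite (Nat.mod_small i) in Hji by exact Hi.
    + subst; now left.
    + right; right; repeat split; simpl; auto; ring.
  - rewrite ribbon_map_s1 in E.
    destruct (fold_pt_on_piece (S i) j t (- d) e Hj He (eq_sym E))
      as [[Hji [-> ->]]|[Hji [-> ->]]].
    + right; left; repeat split; auto.
    + rewrite (succ_mod3_inj i j Hi Hj Hji), Ropp_involutive; now left.
Qed.

Lemma double_pt_pieces p q : double_pt eqtri w p q ->
  0 < rp_s p < 1 /\ 0 < rp_s q < 1 /\ rp_i p <> rp_i q.
Proof.
  intros D; split; [|split].
  - exact (double_pt_interior_l p q D).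
  - exact (double_pt_interior_l q p (double_pt_sym eqtri w p q D)).
  - destruct D as [Hp [Hq [N E]]]; intros Hi.
    exact (N (same_piece_same_pt p q Hp Hq Hi E)).
Qed.

End EqtriRibbon.

Lemma no_triple_point w p q r :
  w < 2 * sqrt 3 / 3 -> in_ribbon w p -> in_ribbon w q -> in_ribbon w r ->
  rp_i p <> rp_i q -> rp_i q <> rp_i r -> rp_i p <> rp_i r ->
  image eqtri p = image eqtri q -> image eqtri q = image eqtri r -> False.
Proof.
  intros Hw Hp Hq Hr Npq Nqr Npr Epq Eqr.
  assert (dist_le : forall x, in_ribbon w x ->
                      edge_dist (rp_i x) (image eqtri x) <= w / 2).
  { intros x [Hx [_ Hxd]]; unfold image; rewrite edge_dist_ribbon_map by exact Hx; lra. }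
  pose proof (dist_le p Hp) as Dp; pose proof (dist_le q Hq) as Dq;
    pose proof (dist_le r Hr) as Dr.
  rewrite Epq in Dp; rewrite <- Eqr in Dr.
  pose proof (edge_dist_sum (image eqtri q)).
  destruct Hp as [Hp _], Hq as [Hq _], Hr as [Hr _].
  destruct (rp_i p) as [|[|[|a]]]; try lia; destruct (rp_i q) as [|[|[|b]]]; try lia;
    destruct (rp_i r) as [|[|[|c]]]; try lia; lra.
Qed.

Definition fold_sign (b : bool) : R := if b then 1 else -1.

(* Any two distinct pieces of a 3-stick ribbon are glued along a fold, whose type
   decides which one lies on top; the value for [a = b] is irrelevant. *)
Definition piece_order (F : nat -> bool) (a b : nat) : R :=
  if Nat.eqb a ((b + 1) mod 3) then fold_sign (F a)
  else if Nat.eqb b ((a + 1) mod 3) then - fold_sign (F b) else -1.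

Lemma piece_order_sign F a b : piece_order F a b = 1 \/ piece_order F a b = -1.
Proof.
  unfold piece_order, fold_sign.
  destruct (Nat.eqb _ _); [destruct (F a); lra|].
  destruct (Nat.eqb _ _); [destruct (F b); lra|lra].
Qed.

Lemma piece_order_antisym F a b : (a < 3)%nat -> (b < 3)%nat -> a <> b ->
  piece_order F b a = - piece_order F a b.
Proof.
  intros Ha Hb Hab.
  destruct a as [|[|[|a]]]; try lia; destruct b as [|[|[|b]]]; try lia;
    unfold piece_order, fold_sign; simpl; destruct (F 0%nat), (F 1%nat), (F 2%nat); lra.
Qed.

(* Three folds of the same type make the piece order cyclic. *)
Lemma piece_order_trans F a b c :
  (a < 3)%nat -> (b < 3)%nat -> (c < 3)%nat -> a <> b -> b <> c -> a <> c ->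
  piece_order F a b = 1 -> piece_order F b c = 1 ->
  piece_order F a c = 1 \/ all_same_type F.
Proof.
  intros Ha Hb Hc Hab Hbc Hac; unfold all_same_type.
  destruct a as [|[|[|a]]]; try lia; destruct b as [|[|[|b]]]; try lia;
    destruct c as [|[|[|c]]]; try lia;
    unfold piece_order, fold_sign; simpl; destruct (F 0%nat), (F 1%nat), (F 2%nat);
    intros; try lra; auto.
Qed.

Lemma piece_order_prev F i : (i < 3)%nat ->
  piece_order F i ((i + 2) mod 3) = fold_sign (F i).
Proof. intros Hi; destruct i as [|[|[|i]]]; try lia; reflexivity. Qed.

Lemma immersed_eqtri w : w < 2 * sqrt 3 -> immersed_away_from_folds eqtri w.
Proof.
  intros Hw i s d Hi _ _; exists 1; split; [lra|].
  intros s1 d1 s2 d2 _ Hd1 _ _ _ _ E.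
  apply (ribbon_map_eqtri_inj i s1 d1 s2 d2 Hi); [lra|exact E].
Qed.

Lemma crossing_info_piece_order F w :
  0 < w < 2 * sqrt 3 -> (all_same_type F -> w < 2 * sqrt 3 / 3) ->
  crossing_info eqtri w (fun p q => piece_order F (rp_i p) (rp_i q)).
Proof.
  intros Hw Hsame; split; [|split; [|split; [|split]]].
  - intros p q _; apply piece_order_sign.
  - intros p q p' q' D Sp Sq _ _.
    destruct (double_pt_pieces w Hw p q D) as [Ip [Iq _]].
    now rewrite (same_pt_interior p p' Ip Sp), (same_pt_interior q q' Iq Sq).
  - intros p q D; destruct (double_pt_pieces w Hw p q D) as [_ [_ N]].
    destruct D as [[Hp _] [[Hq _] _]]; now apply piece_order_antisym.
  - intros p q r Dpq Dqr Dpr Opq Oqr.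
    destruct (double_pt_pieces w Hw p q Dpq) as [_ [_ Npq]].
    destruct (double_pt_pieces w Hw q r Dqr) as [_ [_ Nqr]].
    destruct (double_pt_pieces w Hw p r Dpr) as [_ [_ Npr]].
    destruct Dpq as [Rp [Rq [_ Epq]]], Dqr as [_ [Rr [_ Eqr]]].
    destruct (piece_order_trans F _ _ _ (proj1 Rp) (proj1 Rq) (proj1 Rr)
                Npq Nqr Npr Opq Oqr) as [H|H]; [exact H|].
    destruct (no_triple_point w p q r (Hsame H) Rp Rq Rr Npq Nqr Npr Epq Eqr).
  - intros p q D; exists 1; split; [lra|].
    intros p' q' [p1 [p2 [Sp1 [Sp2 [Ep _]]]]] [q1 [q2 [Sq1 [Sq2 [Eq _]]]]] D'.
    destruct (double_pt_pieces w Hw p q D) as [Ip [Iq _]].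
    destruct (double_pt_pieces w Hw p' q' D') as [Ip' [Iq' _]].
    rewrite (same_pt_interior p p1 Ip Sp1), (same_pt_interior p' p2 Ip' Sp2) in Ep.
    rewrite (same_pt_interior q q1 Iq Sq1), (same_pt_interior q' q2 Iq' Sq2) in Eq.
    now rewrite Ep, Eq.
Qed.

Lemma allowed_eqtri F w :
  0 < w < 2 * sqrt 3 -> (all_same_type F -> w < 2 * sqrt 3 / 3) -> allowed eqtri w F.
Proof.
  intros Hw Hsame; split; [apply immersed_eqtri; lra|].
  exists (fun p q => piece_order F (rp_i p) (rp_i q)).
  split; [exact (crossing_info_piece_order F w Hw Hsame)|].
  exists 1; split; [lra|].
  intros i p q Hi -> _ -> _ _; exact (piece_order_prev F i Hi).
Qed.

Theorem proposition4p4 :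
  (forall F : nat -> bool, all_same_type F -> min_ribbonlength_le F (3 * sqrt 3)) /\
  (forall F : nat -> bool, ~ all_same_type F -> min_ribbonlength_le F (sqrt 3)).
Proof.
  pose proof sqrt3_pos; pose proof sqrt3_sq.
  split; intros F HF.
  - replace (3 * sqrt 3) with (length_K eqtri / (2 * sqrt 3 / 3))
      by (rewrite length_eqtri; field_simplify_eq; [nra|lra]).
    apply min_ribbonlength_le_of_allowed; [exact nondegenerate_eqtri|lra|].
    intros w Hw; apply allowed_eqtri; [lra|intros; lra].
  - replace (sqrt 3) with (length_K eqtri / (2 * sqrt 3))
      by (rewrite length_eqtri; field_simplify_eq; [nra|lra]).
    apply min_ribbonlength_le_of_allowed; [exact nondegenerate_eqtri|lra|].
    intros w Hw; apply allowed_eqtri; [lra|intros; contradiction].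
Qed.
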